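(* Let $d\ge2$, $\gamma\ge2d$, $v\in\mathcal R_\infty^{(\gamma)}$, and let $h\in\ell^\infty(\mathbb Z^d,\mathbb Z)$ satisfy $M_h:=\max_{\mathbf m}h_{\mathbf m}>0$ and $v+f^{(d,\gamma)}\cdot h\in\mathcal R^{(\gamma)}_\infty$. Then every connected component of $\mathcal S_{\max}(h)=\{\mathbf n\in\mathbb Z^d:h_{\mathbf n}=M_h\}$ is infinite.
   Context: $f^{(d,\gamma)}=\gamma-\sum_{i=1}^d(u_i+u_i^{-1})$, acting on $h\in\ell^\infty(\mathbb Z^d,\mathbb Z)$ by $(f^{(d,\gamma)}\cdot h)_{\mathbf n}=\gamma h_{\mathbf n}-\sum_i(h_{\mathbf n+\mathbf e^{(i)}}+h_{\mathbf n-\mathbf e^{(i)}})$. For nonempty $F\subset\mathbb Z^d$, $\mathsf N_F(\mathbf n)=|F\cap\{\mathbf n\pm\mathbf e^{(i)}\}|$. $\mathcal R^{(\gamma)}_\infty=\{v\in\{0,\dots,\gamma-1\}^{\mathbb Z^d}:$ for every finite nonempty $F\subset\mathbb Z^d$ there is $\mathbf n\in F$ with $v_{\mathbf n}\ge\mathsf N_F(\mathbf n)\}$. A set $S\subset\mathbb Z^d$ is connected if any two points of $S$ are joined by a path $p(0),\dots,p(k)$ in $S$ with $\|p(j)-p(j-1)\|_{\max}=1$. *)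

From HB Require Import structures.
From mathcomp Require Import all_boot all_order all_algebra.
Set Implicit Arguments. Unset Strict Implicit. Unset Printing Implicit Defensive.
Import Order.TTheory GRing.Theory Num.Theory.
Local Open Scope ring_scope.

Definition pt (d : nat) := {ffun 'I_d -> int}.

Definition shiftp d (n : pt d) (i : 'I_d) : pt d := [ffun j => n j + (j == i)%:Z].
Definition shiftm d (n : pt d) (i : 'I_d) : pt d := [ffun j => n j - (j == i)%:Z].

Definition bounded d (h : pt d -> int) : Prop := exists B : int, forall n, `|h n| <= B.

Definition fact_h d (gamma : nat) (h : pt d -> int) (n : pt d) : int :=
  gamma%:Z * h n - \sum_(i < d) (h (shiftp n i) + h (shiftm n i)).

Definition NF d (F : seq (pt d)) (n : pt d) : nat :=
  (\sum_(i < d) ((shiftp n i \in F) + (shiftm n i \in F)))%N.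

Definition R_inf d (gamma : nat) (v : pt d -> int) : Prop :=
  (forall n, 0 <= v n <= gamma%:Z - 1) /\
  (forall F : seq (pt d), F != [::] ->
     exists2 n, n \in F & (NF F n)%:Z <= v n).

Definition adj d (x y : pt d) : bool :=
  (x != y) && [forall i, `|x i - y i| <= 1].

Definition conn_in d (S : pt d -> bool) (x y : pt d) : Prop :=
  exists p : seq (pt d), [/\ path (@adj d) x p, last x p = y & all S (x :: p)].

Definition infinite_set d (A : pt d -> Prop) : Prop :=
  forall s : seq (pt d), exists2 y, A y & y \notin s.

(* Suppose the component C of a maximum point n inside
   S_max(h) = {h = M} were finite, and let F be a list enumerating C.
   Since v is recurrent, some m in F satisfies N_F(m) <= v_m.  Every
   neighbour of m lying in F has height M, while every neighbour outside F
   has height at most M - 1 (it cannot be a maximum point, being adjacent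
   to C without belonging to it).  Summing over the 2d neighbours,
     (f.h)_m >= gamma M - (M - 1) 2d - N_F(m) >= gamma - N_F(m),
   using M >= 1 and gamma >= 2d.  Hence v_m + (f.h)_m >= gamma, which
   contradicts the bound v + f.h <= gamma - 1 contained in recurrence. *)
From HB Require Import structures.
From mathcomp Require Import all_boot all_order all_algebra zify.
From Stdlib Require Import Classical.
Import Order.TTheory GRing.Theory Num.Theory.
Set Implicit Arguments. Unset Strict Implicit.
Local Open Scope ring_scope.

(* A (possibly undecidable) predicate whose points all lie in a list is
   enumerated by some list; this turns a finite component into a set F. *)
Lemma enum_bounded_pred (T : eqType) (P : T -> Prop) (s : seq T) :
  (forall y, P y -> y \in s) -> exists F : seq T, forall y, y \in F <-> P y.
Proof.
move=> Ps; suff [F HF] : exists F : seq T, forall y, y \in F <-> y \in s /\ P y.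
  by exists F => y; rewrite HF; split=> [[] // | Py]; split; auto.
elim: s {Ps} => [|a s [F HF]]; first by exists [::] => y; split=> // [[]].
have [Pa | nPa] := classic (P a); [exists (a :: F) | exists F] => y;
  rewrite !in_cons; split.
- by case/predU1P => [->|/HF [ys Py]]; split; rewrite ?eqxx ?ys ?orbT.
- by case=> /predU1P [->|ys] Py; rewrite ?eqxx //; apply/orP; right; apply/HF.
- by case/HF=> ys Py; rewrite ys orbT.
- by case=> /predU1P [ya|ys] Py; [rewrite ya in Py | apply/HF].
Qed.

Lemma adj_shiftp d (m : pt d) i : adj m (shiftp m i).
Proof.
apply/andP; split.
- by apply/eqP => /(congr1 (fun f : pt d => f i)); rewrite ffunE eqxx; lia.
- by apply/forallP => j; rewrite ffunE; case: (j == i); lia.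
Qed.

Lemma adj_shiftm d (m : pt d) i : adj m (shiftm m i).
Proof.
apply/andP; split.
- by apply/eqP => /(congr1 (fun f : pt d => f i)); rewrite ffunE eqxx; lia.
- by apply/forallP => j; rewrite ffunE; case: (j == i); lia.
Qed.

Lemma conn_in_mem d (S : pt d -> bool) x y : conn_in S x y -> S y.
Proof. by case=> p [_ <- /allP]; apply; apply: mem_last. Qed.

Lemma conn_in_adj d (S : pt d -> bool) x y z :
  conn_in S x y -> adj y z -> S z -> conn_in S x z.
Proof.
case=> p [p_path <- p_S] yz Sz; exists (rcons p z); split.
- by rewrite rcons_path p_path.
- by rewrite last_rcons.
- by rewrite -rcons_cons all_rcons Sz.
Qed.

Section MaximumComponent.

Variables (d : nat) (h : pt d -> int) (M : int).
Hypothesis h_le_M : forall m, h m <= M.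

Lemma neighbour_height (F : seq (pt d)) n m x :
  (forall y, y \in F <-> conn_in (fun y => h y == M) n y) ->
  m \in F -> adj m x -> h x <= M - 1 + (x \in F)%:Z.
Proof.
move=> HF /HF m_conn mx; case xF: (x \in F).
  by move/HF/conn_in_mem/eqP: xF => ->; rewrite subrK.
have hx_ne : h x != M.
  apply/eqP => hx; move/negbT/negP: xF; apply; apply/HF.
  by apply: conn_in_adj m_conn mx _; rewrite hx.
by rewrite addr0; have := h_le_M x; lia.
Qed.

Lemma neighbour_sum (F : seq (pt d)) (m : pt d) :
  (forall x, adj m x -> h x <= M - 1 + (x \in F)%:Z) ->
  \sum_(i < d) (h (shiftp m i) + h (shiftm m i)) <=
    (M - 1) * (2 * d)%:R + (NF F m)%:Z.
Proof.
move=> nb; have -> : (NF F m)%:Z =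
    \sum_(i < d) ((shiftp m i \in F)%:Z + (shiftm m i \in F)%:Z).
  rewrite /NF (big_morph Posz PoszD (erefl 0%:Z)).
  by apply: eq_bigr => i _; rewrite PoszD.
have -> : (M - 1) * (2 * d)%:R = \sum_(i < d) (M - 1) * 2.
  by rewrite sumr_const card_ord natrM mulrA mulr_natr.
rewrite -big_split /=; apply: ler_sum => i _.
apply: (le_trans (lerD (nb _ (adj_shiftp m i)) (nb _ (adj_shiftm m i)))).
by rewrite addrACA mulr_natr mulr2n.
Qed.

Lemma fact_h_at_max (gamma : nat) (F : seq (pt d)) (m : pt d) :
  (2 * d <= gamma)%N -> 0 < M -> h m = M ->
  (forall x, adj m x -> h x <= M - 1 + (x \in F)%:Z) ->
  gamma%:Z - (NF F m)%:Z <= fact_h gamma h m.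
Proof.
move=> le_2d_gamma M_gt0 hm nb; rewrite /fact_h hm.
have sum_le := neighbour_sum nb.
have : (M - 1) * (2 * d)%:R <= (M - 1) * gamma%:Z.
  by apply: ler_wpM2l; [rewrite subr_ge0 | rewrite natz lez_nat].
nia.
Qed.

End MaximumComponent.

Theorem corollary4p2 (d gamma : nat) (v h : pt d -> int) (M : int) :
  (2 <= d)%N -> (2 * d <= gamma)%N ->
  R_inf gamma v ->
  bounded h ->
  (forall m, h m <= M) -> (exists m, h m = M) -> 0 < M ->
  R_inf gamma (fun n => v n + fact_h gamma h n) ->
  forall n, h n = M -> infinite_set (conn_in (fun m => h m == M) n).
Proof.
move=> _ le_2d_gamma [_ v_rec] _ h_le_M _ M_gt0 [w_bd _] n hn s.
apply: NNPP => not_inf.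
have C_in_s : forall y, conn_in (fun m => h m == M) n y -> y \in s.
  by move=> y Cy; apply: NNPP => ys; apply: not_inf; exists y; [|apply/negP].
have [F HF] := enum_bounded_pred C_in_s.
have nF : n \in F by apply/HF; exists [::]; rewrite /= hn eqxx.
have [|m mF vm_ge] := v_rec F; first by apply: contraTneq nF => ->.
have hm : h m = M by apply/eqP; exact: conn_in_mem ((HF m).1 mF).
have := fact_h_at_max le_2d_gamma M_gt0 hm (fun x => neighbour_height h_le_M HF mF).
by have /andP [_] := w_bd m; lia.
Qed.
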